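(* Let $n\ge3$. The map $J\mathcal{E}\to H^1$, $v\mapsto[\,i\,\bar\partial_b v\,]$, is surjective with kernel $J\mathcal{P}$, hence induces an isomorphism $J\mathcal{E}/J\mathcal{P}\cong H^1$, where $$H^1=\frac{\ker(\bar\partial_b:J\mathcal{E}^{0,1}\to J\mathcal{E}^{0,2})}{\operatorname{image}(\bar\partial_b:J\mathcal{E}\to J\mathcal{E}^{0,1})}.$$
   Context: $S^m\subset\mathbb{C}^n$ is the unit sphere, $m=2n-1$, $e_0\in S^m$ a fixed point. $T^{1,0}_b=\mathbb{C}TS^m\cap T^{1,0}\mathbb{C}^n$, $T^{0,1}_b$ its conjugate. For $p+q\le n-1$, $\mathcal{E}^{p,q}$ is the space of sections of the trace-free part (with respect to the Levi form) of $\bigwedge^p(T^{1,0}_b)^*\otimes\bigwedge^q(T^{0,1}_b)^*$; $\bar\partial_b:\mathcal{E}^{p,q}\to\mathcal{E}^{p,q+1}$ is obtained by applying the exterior derivative to a representing form and projecting (on functions, $\bar\partial_bf=df|_{T^{0,1}_b}$). $\mathcal{E}$ denotes real-valued smooth functions on $S^m$; $J$ denotes $\infty$-jets at $e_0$. $J\mathcal{P}\subset J\mathcal{E}$ is the space of jets of real CR pluriharmonic functions (real parts of jets of CR functions, equivalently real functions extending to pluriharmonic functions on the ball near $e_0$). $H^1$ is regarded as a real vector space. *)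

From HB Require Import structures.
From mathcomp Require Import all_boot all_order all_algebra.
From mathcomp Require Import reals.
From mathcomp Require Import complex.
Set Implicit Arguments. Unset Strict Implicit. Unset Printing Implicit Defensive.
Import Order.TTheory GRing.Theory Num.Theory.
Local Open Scope ring_scope.
Local Open Scope complex_scope.

(* Infinite jets at e0 are modelled by formal power series (complex coeffs)
   in the ambient variables w_j = z_j - e0_j and their conjugates
   wb_j = conj(z_j) - conj(e0_j), j < n.  A monomial is a pair of
   exponent vectors (alpha, beta) standing for w^alpha wb^beta.
   Jets on the sphere S^{2n-1} are classes modulo the ideal generated by
   rho - 1, rho = sum_j z_j conj(z_j).           *)

Section Jets.
Variables (R : realType) (n : nat) (e0 : 'I_n -> R[i]).

Definition mono := ({ffun 'I_n -> nat} * {ffun 'I_n -> nat})%type.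
Definition fps := mono -> R[i].

Definition fps0 : fps := fun _ => 0.
Definition fpsD (f g : fps) : fps := fun m => f m + g m.
Definition fpsZ (c : R[i]) (f : fps) : fps := fun m => c * f m.

Definition incr (a : {ffun 'I_n -> nat}) (j : 'I_n) : {ffun 'I_n -> nat} :=
  [ffun i => if i == j then (a i).+1 else a i].
Definition decr (a : {ffun 'I_n -> nat}) (j : 'I_n) : {ffun 'I_n -> nat} :=
  [ffun i => if i == j then (a i).-1 else a i].

Definition dzb (j : 'I_n) (f : fps) : fps :=
  fun m => ((m.2 j).+1)%:R * f (m.1, incr m.2 j).

Definition mulw (j : 'I_n) (f : fps) : fps :=
  fun m => if (0 < m.1 j)%N then f (decr m.1 j, m.2) else 0.
Definition mulwb (j : 'I_n) (f : fps) : fps :=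
  fun m => if (0 < m.2 j)%N then f (m.1, decr m.2 j) else 0.

Definition mulz (j : 'I_n) (f : fps) : fps := fpsD (mulw j f) (fpsZ (e0 j) f).
Definition mulzb (j : 'I_n) (f : fps) : fps :=
  fpsD (mulwb j f) (fpsZ (conjc (e0 j)) f).

Definition rho1 (f : fps) : fps :=
  fun m => \sum_(j < n) mulz j (mulzb j f) m - f m.

Definition fconj (f : fps) : fps := fun m => conjc (f (m.2, m.1)).
Definition is_real (f : fps) : Prop := forall m, fconj f m = f m.
Definition fRe (f : fps) : fps := fun m => (f m + fconj f m) / 2%:R.

Definition jet_eq (f g : fps) : Prop :=
  exists h : fps, forall m, f m - g m = rho1 h m.

(* (0,1)-forms: coefficient of d wb_j; equality of their jets as sections
   of (T^{0,1}_b)^* : modulo h * dbar rho (dbar rho = sum_j z_j d wb_j)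
   and modulo (rho - 1). *)
Definition form01 := 'I_n -> fps.
Definition form01_eq (a b : form01) : Prop :=
  exists (h : fps) (eta : 'I_n -> fps), forall j m,
    a j m - b j m = mulz j h m + rho1 (eta j) m.

(* (0,2)-forms: coefficient c j k of d wb_j /\ d wb_k (antisymmetric);
   equality as jets of sections of /\^2 (T^{0,1}_b)^* *)
Definition form02 := 'I_n -> 'I_n -> fps.
Definition form02_eq (a b : form02) : Prop :=
  exists (th : 'I_n -> fps) (eta : 'I_n -> 'I_n -> fps), forall j k m,
    a j k m - b j k m = mulz j (th k) m - mulz k (th j) m + rho1 (eta j k) m.
Definition form02_0 : form02 := fun _ _ => fps0.

Definition dbarb0 (f : fps) : form01 := fun j => dzb j f.
Definition dbarb1 (w : form01) : form02 :=
  fun j k m => dzb j (w k) m - dzb k (w j) m.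

(* J P : jets of real CR-pluriharmonic functions = real parts of CR jets *)
Definition is_CR (f : fps) : Prop := form01_eq (dbarb0 f) (fun _ => fps0).
Definition JP (v : fps) : Prop :=
  exists f : fps, is_CR f /\ jet_eq v (fRe f).

Definition i_dbarb (v : fps) : form01 := fun j => fpsZ 'i (dzb j v).

Definition cocycle01 (w : form01) : Prop := form02_eq (dbarb1 w) form02_0.
Definition coboundary01 (w : form01) : Prop :=
  exists u : fps, is_real u /\ form01_eq w (dbarb0 u).
Definition H1_eq (a b : form01) : Prop :=
  coboundary01 (fun j => fpsD (a j) (fpsZ (-1) (b j))).

End Jets.

From HB Require Import structures.
From mathcomp Require Import all_boot all_order all_algebra.
From mathcomp Require Import boolp reals functions.
From mathcomp Require Import complex ring.
Import Order.TTheory GRing.Theory Num.Theory.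
Local Open Scope ring_scope.
Local Open Scope complex_scope.

(** Write ℓ = Σ_j conj(e0_j) w_j, s = 1 + ℓ = Σ_j conj(e0_j) z_j and
    b_j = zb_j s - conj(e0_j), so that ∂_k b_j = δ_jk s (∂_k = ∂/∂zb_k) and
    Σ_j b_j z_j = (ρ - 1) s on the sphere.  The first-order operators
    L_q = Σ_j b_j ∂_j + q s then satisfy ∂_k L_q = L_(q+1) ∂_k,
    L_q (ρ - 1) = (ρ - 1) L_(q+1), commute with multiplication by z_j, and are
    invertible on formal power series for q ≥ 1, being |β| + q plus a term
    that raises the degree in w.  The Cartan-type identity
    L_1 c_k = ∂_k (Σ_j b_j c_j) + Σ_j b_j (∂_j c_k - ∂_k c_j), applied to
    c = L_1^(-1) w, shows that every ∂̄_b-closed (0,1)-jet is ∂̄_b-exact.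
    Splitting a primitive F into real and imaginary parts then gives both the
    surjectivity of v ↦ [i ∂̄_b v] and the description of its kernel. *)

Section TriangularSystem.
Variables (K : fieldType) (M : Type) (deg : M -> nat).
Variables (d : M -> K) (T : (M -> K) -> M -> K).
Hypothesis d_neq0 : forall m, d m != 0.
Hypothesis T_lower : forall g1 g2 m,
  (forall m', (deg m' < deg m)%N -> g1 m' = g2 m') -> T g1 m = T g2 m.

Fixpoint triangular_approx (h : M -> K) k : M -> K :=
  if k is k'.+1 then fun m => (h m - T (triangular_approx h k') m) / d m
  else fun _ => 0.

Lemma triangular_approx_stable h k m k' : (deg m < k)%N -> (k <= k')%N ->
  triangular_approx h k m = triangular_approx h k' m.
Proof.
elim: k m k' => [//|k IH] m [//|k'] hm hk /=.
congr ((_ - _) / _); apply: T_lower => m' hm'.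
exact: IH (leq_trans hm' hm) hk.
Qed.

Definition triangular_solve h m := triangular_approx h (deg m).+1 m.

Lemma triangular_solveP h m :
  d m * triangular_solve h m + T (triangular_solve h) m = h m.
Proof.
have -> : T (triangular_solve h) m = T (triangular_approx h (deg m)) m.
  by apply: T_lower => m' hm'; apply: triangular_approx_stable.
by rewrite /triangular_solve /= mulrC divfK // subrK.
Qed.

Lemma triangular_uniq g1 g2 :
  (forall m, d m * g1 m + T g1 m = d m * g2 m + T g2 m) -> g1 = g2.
Proof.
move=> E; apply/funext => m.
suff: forall k m, (deg m < k)%N -> g1 m = g2 m by apply; apply: ltnSn.
elim=> [//|k IH] {}m hm.
have ET : T g1 m = T g2 m.
  by apply: T_lower => m' hm'; apply: IH; apply: leq_trans hm' hm.
by apply: (mulfI (d_neq0 m)); apply: (addIr (T g1 m)); rewrite {2}ET.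
Qed.

End TriangularSystem.
Arguments triangular_solve {K M} deg d T h m.

Lemma scalerC (K : comPzRingType) (V : lmodType K) (a b : K) (v : V) :
  a *: (b *: v) = b *: (a *: v).
Proof. by rewrite !scalerA mulrC. Qed.

Lemma sum_delta {V : nmodType} {n} (F : 'I_n -> V) j :
  \sum_k (if j == k then F k else 0) = F j.
Proof. by rewrite -big_mkcond (big_pred1 j) // => k; rewrite eq_sym. Qed.

Section ExponentVectors.
Variable n : nat.
Implicit Types (a : {ffun 'I_n -> nat}) (i j k : 'I_n).

Lemma incr_eq a j : incr a j j = (a j).+1.
Proof. by rewrite ffunE eqxx. Qed.
Lemma decr_eq a j : decr a j j = (a j).-1.
Proof. by rewrite ffunE eqxx. Qed.
Lemma incr_neq a j k : j != k -> incr a j k = a k.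
Proof. by move=> njk; rewrite ffunE eq_sym (negPf njk). Qed.
Lemma decr_neq a j k : j != k -> decr a j k = a k.
Proof. by move=> njk; rewrite ffunE eq_sym (negPf njk). Qed.

Lemma incrK a j : decr (incr a j) j = a.
Proof. by apply/ffunP => i; rewrite !ffunE; case: eqP. Qed.
Lemma decrK a j : (0 < a j)%N -> incr (decr a j) j = a.
Proof.
move=> aj; apply/ffunP => i; rewrite !ffunE.
by case: eqP => // ->; rewrite prednK.
Qed.

Lemma incrC a j k : incr (incr a j) k = incr (incr a k) j.
Proof.
by apply/ffunP => i; rewrite !ffunE; case: (i =P j); case: (i =P k) => // -> ->.
Qed.
Lemma decrC a j k : decr (decr a j) k = decr (decr a k) j.
Proof.
by apply/ffunP => i; rewrite !ffunE; case: (i =P j); case: (i =P k) => // -> ->.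
Qed.
Lemma incr_decrC a j k : j != k -> incr (decr a k) j = decr (incr a j) k.
Proof.
move=> njk; apply/ffunP => i; rewrite !ffunE.
by case: (i =P j) => [->|]; rewrite ?(negPf njk) //; case: eqP.
Qed.

Definition mdeg a := (\sum_i a i)%N.

Lemma mdeg_decr a j : (0 < a j)%N -> (mdeg (decr a j) < mdeg a)%N.
Proof.
move=> aj; rewrite /mdeg (bigD1 j) //= [X in (_ < X)%N](bigD1 j) //= decr_eq.
rewrite (eq_bigr a) => [|i ij]; last by rewrite decr_neq // eq_sym.
by rewrite ltn_add2r prednK.
Qed.

End ExponentVectors.
Arguments mdeg {n}.

Section FormalSeries.
Variables (R : realType) (n : nat).
Local Notation C := R[i].
Local Notation fps := (fps R n).
Implicit Types (f g : fps) (c : C) (j k : 'I_n).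

Lemma dzb_is_linear j : linear (@dzb R n j).
Proof. by move=> c f g; apply/funext => m; rewrite /dzb /= mulrDr mulrCA. Qed.
HB.instance Definition _ j :=
  GRing.isLinear.Build C fps fps *:%R (@dzb R n j) (dzb_is_linear j).

Lemma mulw_is_linear j : linear (@mulw R n j).
Proof.
move=> c f g; apply/funext => m; rewrite /mulw !fctE /=.
by case: ifP => _; rewrite ?scaler0 ?addr0.
Qed.
HB.instance Definition _ j :=
  GRing.isLinear.Build C fps fps *:%R (@mulw R n j) (mulw_is_linear j).

Lemma mulwb_is_linear j : linear (@mulwb R n j).
Proof.
move=> c f g; apply/funext => m; rewrite /mulwb !fctE /=.
by case: ifP => _; rewrite ?scaler0 ?addr0.
Qed.
HB.instance Definition _ j :=
  GRing.isLinear.Build C fps fps *:%R (@mulwb R n j) (mulwb_is_linear j).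

Lemma mulwC j k f : mulw j (mulw k f) = mulw k (mulw j f).
Proof.
apply/funext => -[a b]; rewrite /mulw /=; case: (eqVneq j k) => [->//|njk].
by rewrite decr_neq // decr_neq 1?eq_sym // decrC; case: ifP; case: ifP.
Qed.

Lemma mulwbC j k f : mulwb j (mulwb k f) = mulwb k (mulwb j f).
Proof.
apply/funext => -[a b]; rewrite /mulwb /=; case: (eqVneq j k) => [->//|njk].
by rewrite decr_neq // decr_neq 1?eq_sym // decrC; case: ifP; case: ifP.
Qed.

Lemma mulw_mulwb j k f : mulw j (mulwb k f) = mulwb k (mulw j f).
Proof.
by apply/funext => -[a b]; rewrite /mulwb /mulw /=; case: ifP; case: ifP.
Qed.

Lemma dzb_mulw j k f : dzb j (mulw k f) = mulw k (dzb j f).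
Proof.
by apply/funext => -[a b]; rewrite /dzb /mulw /=; case: ifP; rewrite ?mulr0.
Qed.

Lemma dzbC j k f : dzb j (dzb k f) = dzb k (dzb j f).
Proof.
apply/funext => -[a b]; rewrite /dzb /=; case: (eqVneq j k) => [->//|njk].
by rewrite incr_neq // incr_neq 1?eq_sym // incrC mulrCA.
Qed.

Lemma dzb_mulwb j k f :
  dzb j (mulwb k f) = (if j == k then f else 0) + mulwb k (dzb j f).
Proof.
apply/funext => -[a b].
case: (eqVneq j k) => [<-|njk]; rewrite !fctE /dzb /mulwb /=.
  rewrite incr_eq incrK /=; case: (posnP (b j)) => [->|bj].
    by rewrite mul1r addr0.
  by rewrite decr_eq prednK // decrK // -natr1 mulrDl mul1r addrC.
rewrite incr_neq // add0r -incr_decrC // decr_neq 1?eq_sym //.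
by case: ifP; rewrite ?mulr0.
Qed.

Definition commute_mulw (T : fps -> fps) :=
  forall k f, T (mulw k f) = mulw k (T f).
Definition commute_mulwb (T : fps -> fps) :=
  forall k f, T (mulwb k f) = mulwb k (T f).

Lemma commute_mulP (X : fps -> fps) :
  (forall T : {linear fps -> fps}, commute_mulw T -> commute_mulwb T ->
     forall f, T (X f) = X (T f)) ->
  commute_mulw X /\ commute_mulwb X.
Proof.
move=> XC; split=> k f; symmetry; apply: XC => j g.
- exact: mulwC.
- exact: mulw_mulwb.
- exact: esym (mulw_mulwb j k g).
- exact: mulwbC.
Qed.

Section MultiplicationOperators.
Variable e0 : 'I_n -> C.

(* ℓ, s and b_j, written in w = z - e0 and wb = zb - conj e0 without using
   |e0| = 1: b_j = wb_j s + conj(e0_j) ℓ. *)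
Definition mul_ell f : fps := \sum_j conjc (e0 j) *: mulw j f.
Definition mul_s f : fps := f + mul_ell f.
Definition mul_b j f : fps := mulwb j (mul_s f) + conjc (e0 j) *: mul_ell f.

Lemma mulzE j f : mulz e0 j f = mulw j f + e0 j *: f.
Proof. by []. Qed.
Lemma mulzbE j f : mulzb e0 j f = mulwb j f + conjc (e0 j) *: f.
Proof. by []. Qed.
Lemma rho1E f : rho1 e0 f = \sum_j mulz e0 j (mulzb e0 j f) - f.
Proof. by apply/funext => m; rewrite !fctE fct_sumE. Qed.

Lemma mul_ell_is_linear : linear mul_ell.
Proof.
move=> c f g; rewrite /mul_ell scaler_sumr -big_split; apply: eq_bigr => j _ /=.
by rewrite linearP scalerDr !scalerA mulrC.
Qed.
HB.instance Definition _ :=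
  GRing.isLinear.Build C fps fps *:%R mul_ell mul_ell_is_linear.

Lemma mul_s_is_linear : linear mul_s.
Proof. by move=> c f g; rewrite /mul_s linearP scalerDr addrACA. Qed.
HB.instance Definition _ :=
  GRing.isLinear.Build C fps fps *:%R mul_s mul_s_is_linear.

Lemma mul_b_is_linear j : linear (mul_b j).
Proof. by move=> c f g; rewrite /mul_b !linearP scalerDr addrACA scalerC. Qed.
HB.instance Definition _ j :=
  GRing.isLinear.Build C fps fps *:%R (mul_b j) (mul_b_is_linear j).

Lemma mulz_is_linear j : linear (mulz e0 j).
Proof.
by move=> c f g; rewrite !mulzE [mulw j _]linearP !scalerDr addrACA scalerC.
Qed.
HB.instance Definition _ j :=
  GRing.isLinear.Build C fps fps *:%R (mulz e0 j) (mulz_is_linear j).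

Lemma mulzb_is_linear j : linear (mulzb e0 j).
Proof.
by move=> c f g; rewrite !mulzbE [mulwb j _]linearP !scalerDr addrACA scalerC.
Qed.
HB.instance Definition _ j :=
  GRing.isLinear.Build C fps fps *:%R (mulzb e0 j) (mulzb_is_linear j).

Lemma rho1_is_linear : linear (rho1 e0).
Proof.
move=> c f g; rewrite !rho1E scalerBr scaler_sumr addrACA -opprD -big_split /=.
by congr (_ - _); apply: eq_bigr => j _; rewrite !linearP.
Qed.
HB.instance Definition _ :=
  GRing.isLinear.Build C fps fps *:%R (rho1 e0) rho1_is_linear.

Section Commutation.
Variable T : {linear fps -> fps}.
Hypothesis Tw : commute_mulw T.

Lemma mul_ellC f : T (mul_ell f) = mul_ell (T f).
Proof.
by rewrite /mul_ell linear_sum; apply: eq_bigr => j _; rewrite linearZ Tw.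
Qed.

Lemma mul_sC f : T (mul_s f) = mul_s (T f).
Proof. by rewrite /mul_s linearD mul_ellC. Qed.

Lemma mulzC j f : T (mulz e0 j f) = mulz e0 j (T f).
Proof. by rewrite !mulzE linearD linearZ Tw. Qed.

Hypothesis Twb : commute_mulwb T.

Lemma mul_bC j f : T (mul_b j f) = mul_b j (T f).
Proof. by rewrite /mul_b linearD linearZ Twb mul_sC mul_ellC. Qed.

Lemma mulzbC j f : T (mulzb e0 j f) = mulzb e0 j (T f).
Proof. by rewrite !mulzbE linearD linearZ Twb. Qed.

Lemma rho1C f : T (rho1 e0 f) = rho1 e0 (T f).
Proof.
rewrite !rho1E linearB linear_sum; congr (_ - _).
by apply: eq_bigr => j _; rewrite mulzC mulzbC.
Qed.

End Commutation.

Lemma commute_mulz j : commute_mulw (mulz e0 j) /\ commute_mulwb (mulz e0 j).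
Proof. by apply: commute_mulP => T Tw _ f; rewrite mulzC. Qed.

Lemma commute_rho1 : commute_mulw (rho1 e0) /\ commute_mulwb (rho1 e0).
Proof. by apply: commute_mulP => T Tw Twb f; rewrite rho1C. Qed.

Lemma dzb_mul_ell j f : dzb j (mul_ell f) = mul_ell (dzb j f).
Proof. exact: mul_ellC (dzb_mulw j) f. Qed.

Lemma dzb_mul_s j f : dzb j (mul_s f) = mul_s (dzb j f).
Proof. exact: mul_sC (dzb_mulw j) f. Qed.

Lemma dzb_mulz j k f : dzb j (mulz e0 k f) = mulz e0 k (dzb j f).
Proof. exact: mulzC (dzb_mulw j) k f. Qed.

Lemma dzb_mul_b j k f :
  dzb j (mul_b k f) = (if j == k then mul_s f else 0) + mul_b k (dzb j f).
Proof.
by rewrite /mul_b linearD linearZ /= dzb_mulwb dzb_mul_ell dzb_mul_s addrA.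
Qed.

Lemma dzb_rho1 j f : dzb j (rho1 e0 f) = mulz e0 j f + rho1 e0 (dzb j f).
Proof.
rewrite !rho1E linearB linear_sum /=.
under eq_bigr do rewrite dzb_mulz mulzbE linearD linearZ /= dzb_mulwb -addrA
  -mulzbE linearD.
rewrite big_split /= addrA; congr (_ + _ - _).
rewrite -[RHS](sum_delta (fun k => mulz e0 k f)); apply: eq_bigr => k _.
by case: eqP => // _; rewrite linear0.
Qed.

Definition euler q f : fps := \sum_j mul_b j (dzb j f) + q%:R *: mul_s f.

Lemma euler_is_linear q : linear (euler q).
Proof.
move=> c f g; rewrite /euler; under eq_bigr do rewrite !linearP.
rewrite big_split -scaler_sumr [mul_s _]linearP /=.
(* generalized so that scalerDr cannot unfold mul_s *)
move: (\sum_j _) (\sum_j _) (mul_s f) (mul_s g) => A B u v.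
by rewrite !scalerDr scalerC addrACA.
Qed.
HB.instance Definition _ q :=
  GRing.isLinear.Build C fps fps *:%R (euler q) (euler_is_linear q).

Lemma scale_natS q f : q.+1%:R *: f = q%:R *: f + f.
Proof. by rewrite -natr1 scalerDl scale1r. Qed.

Lemma dzb_euler j q f : dzb j (euler q f) = euler q.+1 (dzb j f).
Proof.
rewrite /euler linearD linear_sum linearZ /=.
under eq_bigr do rewrite dzb_mul_b dzbC.
rewrite big_split /= (sum_delta (fun k => mul_s (dzb k f))) dzb_mul_s.
by rewrite scale_natS; ring.
Qed.

Lemma euler_mulz q j f : euler q (mulz e0 j f) = mulz e0 j (euler q f).
Proof.
have [Tw Twb] := commute_mulz j.
rewrite /euler [RHS]linearD linearZ linear_sum /= (mul_sC _ Tw).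
by congr (_ + _); apply: eq_bigr => k _; rewrite dzb_mulz (mul_bC _ Tw Twb).
Qed.

Definition euler_wb f : fps := \sum_j mulwb j (dzb j f).
Definition deriv_e0 f : fps := \sum_j conjc (e0 j) *: dzb j f.
Definition euler_lower q f : fps :=
  mul_ell (euler_wb f + q%:R *: f + deriv_e0 f).

Lemma euler_wbE f m : euler_wb f m = (mdeg m.2)%:R * f m.
Proof.
rewrite /euler_wb fct_sumE /mdeg natr_sum mulr_suml; apply: eq_bigr => j _.
case: m => a b; rewrite /mulwb /dzb /=.
case: (posnP (b j)) => [->|bj]; first by rewrite mul0r.
by rewrite decr_eq prednK // decrK.
Qed.

Lemma euler_split q f m :
  euler q f m = (mdeg m.2 + q)%:R * f m + euler_lower q f m.
Proof.
have -> : euler q f = euler_wb f + q%:R *: f + euler_lower q f.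
  rewrite /euler /mul_b big_split /=.
  have -> : \sum_j mulwb j (mul_s (dzb j f)) = mul_s (euler_wb f).
    rewrite /euler_wb linear_sum; apply: eq_bigr => j _.
    by rewrite (mul_sC _ (fun k g => esym (mulw_mulwb k j g))).
  have -> : \sum_j conjc (e0 j) *: mul_ell (dzb j f) = mul_ell (deriv_e0 f).
    by rewrite /deriv_e0 linear_sum; apply: eq_bigr => j _; rewrite linearZ.
  rewrite /euler_lower /mul_s !linearD linearZ /=; ring.
by rewrite !fctE euler_wbE natrD mulrDl.
Qed.

Lemma euler_lower_triangular q g1 g2 m :
  (forall m', (mdeg m'.1 < mdeg m.1)%N -> g1 m' = g2 m') ->
  euler_lower q g1 m = euler_lower q g2 m.
Proof.
case: m => a b /= g12; rewrite /euler_lower /mul_ell !fct_sumE.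
apply: eq_bigr => j _; rewrite !fctE /mulw /=; case: ifP => // aj.
have {}g12 b' : g1 (decr a j, b') = g2 (decr a j, b').
  by apply: g12; apply: mdeg_decr.
rewrite !euler_wbE /deriv_e0 !fct_sumE /= !g12; congr (_ *: (_ + _)).
by apply: eq_bigr => k _; rewrite !fctE /dzb /= g12.
Qed.

Lemma euler_coef_neq0 q (m : mono n) :
  (0 < q)%N -> (mdeg m.2 + q)%:R != 0 :> C.
Proof. by move=> q0; rewrite pnatr_eq0 addn_eq0 negb_and -!lt0n q0 orbT. Qed.

Definition euler_inv q g : fps := triangular_solve (fun m : mono n => mdeg m.1)
  (fun m => (mdeg m.2 + q)%:R) (euler_lower q) g.

Lemma euler_invK q g : (0 < q)%N -> euler q (euler_inv q g) = g.
Proof.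
move=> q0; apply/funext => m; rewrite euler_split /euler_inv.
apply: (@triangular_solveP C (mono n) (fun m => mdeg m.1)) => [m'|].
  exact: euler_coef_neq0.
exact: euler_lower_triangular.
Qed.

Lemma euler_inj q : (0 < q)%N -> injective (euler q).
Proof.
move=> q0 f1 f2 E.
apply: (@triangular_uniq C (mono n) (fun m => mdeg m.1)
  (fun m => (mdeg m.2 + q)%:R) (euler_lower q)) => [m'||m].
- exact: euler_coef_neq0.
- exact: euler_lower_triangular.
- by rewrite -!euler_split E.
Qed.

Definition contract (c : 'I_n -> fps) : fps := \sum_j mul_b j (c j).

Lemma euler_contract (c : 'I_n -> fps) k :
  euler 1 (c k) =
  dzb k (contract c) + \sum_j mul_b j (dzb j (c k) - dzb k (c j)).
Proof.
rewrite /contract linear_sum /=.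
under eq_bigr do rewrite dzb_mul_b.
rewrite big_split /= (sum_delta (fun j => mul_s (c j))) /euler scale1r.
under [X in _ = _ + X]eq_bigr do rewrite linearB.
rewrite sumrB; ring.
Qed.

Lemma contractC (T : {linear fps -> fps}) (v : 'I_n -> fps) :
  commute_mulw T -> commute_mulwb T ->
  T (contract v) = contract (fun j => T (v j)).
Proof.
move=> Tw Twb; rewrite /contract linear_sum.
by apply: eq_bigr => j _; apply: mul_bC.
Qed.

Section Sphere.
Hypothesis e0_unit : \sum_(j < n) e0 j * conjc (e0 j) = 1.

Lemma sum_conj_mulz g : \sum_k conjc (e0 k) *: mulz e0 k g = mul_s g.
Proof.
under eq_bigr do rewrite mulzE scalerDr scalerA.
rewrite big_split /= -scaler_suml addrC; congr (_ + _).
rewrite -[RHS]scale1r -e0_unit; congr (_ *: _).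
by apply: eq_bigr => k _; rewrite mulrC.
Qed.

Lemma rho1_mulwb_mulz h : rho1 e0 h = \sum_k mulwb k (mulz e0 k h) + mul_ell h.
Proof.
rewrite rho1E; under eq_bigr => k _ do
  rewrite mulzbE linearD linearZ /= (proj2 (commute_mulz k)).
by rewrite big_split /= sum_conj_mulz /mul_s; ring.
Qed.

Lemma sum_mul_b_mulz g : \sum_k mul_b k (mulz e0 k g) = rho1 e0 (mul_s g).
Proof.
rewrite rho1_mulwb_mulz /mul_b big_split /=; congr (_ + _).
  apply: eq_bigr => k _; congr (mulwb k _).
  by rewrite (mul_sC _ (proj1 (commute_mulz k))).
by rewrite -sum_conj_mulz linear_sum; apply: eq_bigr => k _; rewrite linearZ.
Qed.

Lemma euler_rho1 q f : euler q (rho1 e0 f) = rho1 e0 (euler q.+1 f).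
Proof.
have [Tw Twb] := commute_rho1.
rewrite /euler; under eq_bigr do rewrite dzb_rho1 linearD /=.
rewrite big_split /= sum_mul_b_mulz [RHS]linearD linearZ linear_sum /=.
under [in RHS]eq_bigr do rewrite (mul_bC _ Tw Twb).
by rewrite (mul_sC _ Tw) scale_natS; ring.
Qed.

Lemma dbar_closed_exact (w : 'I_n -> fps) th eta :
  (forall j k, dzb j (w k) - dzb k (w j) =
     mulz e0 j (th k) - mulz e0 k (th j) + rho1 e0 (eta j k)) ->
  exists F h eta', forall k, w k = dzb k F + mulz e0 k h + rho1 e0 (eta' k).
Proof.
move=> closed_w.
pose c k := euler_inv 1 (w k).
have cK k : euler 1 (c k) = w k by apply: euler_invK.
pose th' k := euler_inv 2 (th k).
have th'K k : euler 2 (th' k) = th k by apply: euler_invK.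
pose eta' j k := euler_inv 3 (eta j k).
have eta'K j k : euler 3 (eta' j k) = eta j k by apply: euler_invK.
clearbody c th' eta'.
have closed_c j k : dzb j (c k) - dzb k (c j) =
    mulz e0 j (th' k) - mulz e0 k (th' j) + rho1 e0 (eta' j k).
  apply: (@euler_inj 2) => //.
  rewrite (raddfB (euler 2)) (raddfD (euler 2)) (raddfB (euler 2)) /=.
  by rewrite -!dzb_euler !euler_mulz euler_rho1 !cK !th'K eta'K.
exists (contract c), (- contract th').
exists (fun k => mul_s (th' k) + contract (eta'^~ k)) => k.
rewrite -cK euler_contract.
under eq_bigr => j _ do rewrite closed_c (raddfD (mul_b j)) (raddfB (mul_b j)).
rewrite big_split /= sumrB sum_mul_b_mulz.
have [Tw Twb] := commute_mulz k; have [Rw Rwb] := commute_rho1.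
rewrite (raddfN (mulz e0 k)) [in RHS](raddfD (rho1 e0)) /=.
rewrite (contractC _ _ Tw Twb) (contractC _ _ Rw Rwb).
by rewrite /contract; ring.
Qed.

End Sphere.
End MultiplicationOperators.
End FormalSeries.

Section RealParts.
Local Set Implicit Arguments.
Variables (R : realType) (n : nat).
Local Notation fps := (fps R n).
Implicit Types (f u v : fps).

Lemma conjc_i : conjc 'i%C = - 'i%C :> R[i].
Proof. by apply/eqP; rewrite eq_complex /= oppr0 !eqxx. Qed.

Lemma conjc_Ni : conjc (- 'i%C) = 'i%C :> R[i].
Proof. by apply/eqP; rewrite eq_complex /= oppr0 opprK !eqxx. Qed.

Lemma fconjD f g : fconj (f + g) = fconj f + fconj g.
Proof. by apply/funext => m; rewrite /fconj !fctE rmorphD. Qed.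

Lemma fconjZ c f : fconj (c *: f) = conjc c *: fconj f.
Proof. by apply/funext => m; rewrite /fconj !fctE rmorphM. Qed.

Lemma scalecE (c x : R[i]) : c *: x = c * x. Proof. by []. Qed.

Definition fIm f : fps := fRe (- 'i%C *: f).

Lemma fRe_real f : is_real (fRe f).
Proof.
move=> [a b]; rewrite /fRe /fconj /= fmorph_div rmorphD rmorph_nat /= conjcK.
by rewrite addrC.
Qed.

Lemma fIm_real f : is_real (fIm f).
Proof. exact: fRe_real. Qed.

Lemma fcomplexE f : f = fRe f + 'i%C *: fIm f.
Proof.
apply/funext => m; rewrite /fIm /fRe fconjZ conjc_Ni !fctE !scalecE.
by have i2 := sqr_i R; field: i2.
Qed.

Lemma fRe_add_iZ v u : is_real v -> is_real u -> fRe (v + 'i%C *: u) = v.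
Proof.
move=> /funext vr /funext ur; apply/funext => m.
rewrite /fRe fconjD fconjZ conjc_i vr ur !fctE !scalecE.
by field.
Qed.

End RealParts.

Section JetCohomology.
Variables (R : realType) (n : nat) (e0 : 'I_n -> R[i]).
Local Notation C := R[i].
Local Notation fps := (fps R n).
Local Notation form01 := (form01 R n).
Implicit Types (f u v : fps) (a b w : form01).

Lemma dbarb0_is_linear : linear (@dbarb0 R n).
Proof. by move=> c f g; apply/funext => j; rewrite /dbarb0 linearP. Qed.
HB.instance Definition _ :=
  GRing.isLinear.Build C fps form01 *:%R (@dbarb0 R n) dbarb0_is_linear.

Lemma i_dbarbE v : i_dbarb v = 'i%C *: dbarb0 v.
Proof. by []. Qed.

Definition null01 a :=
  exists h (eta : 'I_n -> fps), forall j, a j = mulz e0 j h + rho1 e0 (eta j).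

Lemma form01_eqE a b : form01_eq e0 a b <-> null01 (a - b).
Proof.
split=> -[h [eta E]]; exists h, eta => j; first by apply/funext => m; apply: E.
by move=> m; rewrite -[LHS]/((a - b) j m) E.
Qed.

Lemma null01D a b : null01 a -> null01 b -> null01 (a + b).
Proof.
move=> [h [eta Ea]] [h' [eta' Eb]]; exists (h + h'), (eta + eta') => j.
rewrite -[(a + b) j]/(a j + b j) -[(eta + eta') j]/(eta j + eta' j) Ea Eb.
by rewrite (raddfD (mulz e0 j)) (raddfD (rho1 e0)); ring.
Qed.

Lemma null01Z c a : null01 a -> null01 (c *: a).
Proof.
move=> [h [eta E]]; exists (c *: h), (c *: eta) => j.
rewrite -[(c *: a) j]/(c *: a j) -[(c *: eta) j]/(c *: eta j) E.
by rewrite [mulz _ _ (_ *: _)]linearZ [rho1 _ (_ *: _)]linearZ scalerDr.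
Qed.

Lemma null01_dbarb0_rho1 h : null01 (dbarb0 (rho1 e0 h)).
Proof. by exists h, (fun j => dzb j h) => j; apply: dzb_rho1. Qed.

Lemma H1_eqE a b :
  H1_eq e0 a b <-> exists u, is_real u /\ null01 (a - b - dbarb0 u).
Proof.
rewrite /H1_eq /coboundary01.
have -> : (fun j => fpsD (a j) (fpsZ (-1) (b j))) = a - b.
  by apply/funext => j; rewrite -[fpsD _ _]/(a j + (-1) *: b j) scaleN1r.
by split=> -[u [ur E]]; exists u; split => //; apply/form01_eqE.
Qed.

Hypothesis e0_unit : \sum_(j < n) e0 j * conjc (e0 j) = 1.

Lemma cocycle01_exact w : cocycle01 e0 w -> exists F, null01 (w - dbarb0 F).
Proof.
move=> [th [eta closed_w]].
have [|F [h [eta' E]]] := @dbar_closed_exact R n e0 e0_unit w th eta.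
  by move=> j k; apply/funext => m; have := closed_w j k m; rewrite subr0.
by exists F, h, eta' => k; rewrite -[(w - _) k]/(w k - dzb k F) E; ring.
Qed.

Lemma i_dbarb_onto w :
  cocycle01 e0 w -> exists v, is_real v /\ H1_eq e0 w (i_dbarb v).
Proof.
move=> /cocycle01_exact [F nullF].
exists (fIm F); split; first exact: fIm_real.
apply/H1_eqE; exists (fRe F); split; first exact: fRe_real.
suff -> : w - i_dbarb (fIm F) - dbarb0 (fRe F) = w - dbarb0 F by [].
rewrite i_dbarbE {3}(fcomplexE F) [dbarb0 (_ + _)]linearD /=.
by rewrite [dbarb0 (_ *: _)]linearZ /=; ring.
Qed.

Lemma i_dbarb_kerP v : is_real v -> H1_eq e0 (i_dbarb v) 0 <-> JP e0 v.
Proof.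
move=> vr; split.
  move=> /H1_eqE [u [ur nullu]]; exists (v + 'i%C *: u); split.
    apply/form01_eqE; rewrite subr0.
    suff -> : dbarb0 (v + 'i%C *: u) = - 'i%C *: (i_dbarb v - 0 - dbarb0 u).
      exact: null01Z.
    rewrite linearD linearZ /= subr0 scalerBr scalerA mulNr -expr2 sqr_i opprK.
    by rewrite scale1r scaleNr opprK.
  by rewrite fRe_add_iZ //; exists 0 => m; rewrite linear0 subrr.
move=> [f [/form01_eqE nullf [h vE]]].
have {}vE : v = fRe f + rho1 e0 h.
  by apply/funext => m; rewrite !fctE -vE addrC subrK.
apply/H1_eqE; exists (fIm f); split; first exact: fIm_real.
suff -> : i_dbarb v - 0 - dbarb0 (fIm f) =
    'i%C *: (dbarb0 f - 0) + 'i%C *: dbarb0 (rho1 e0 h).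
  by apply: null01D; apply: null01Z => //; apply: null01_dbarb0_rho1.
rewrite i_dbarbE {2}(fcomplexE f) vE !subr0 !(raddfD (@dbarb0 R n) (fRe f)) /=.
rewrite [dbarb0 (_ *: _)]linearZ /= !scalerDr scalerA -expr2 sqr_i scaleN1r.
by ring.
Qed.

End JetCohomology.

Theorem mainTheorem12 (R : realType) (n : nat) (e0 : 'I_n -> R[i]) :
  (3 <= n)%N ->
  \sum_(j < n) e0 j * conjc (e0 j) = 1 ->
  (* surjectivity onto H^1 *)
  (forall w : form01 R n, cocycle01 e0 w ->
     exists v : fps R n, is_real v /\ H1_eq e0 w (i_dbarb v)) /\
  (* the kernel is exactly J P *)
  (forall v : fps R n, is_real v ->
     (H1_eq e0 (i_dbarb v) (fun _ => @fps0 R n) <-> JP e0 v)).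
Proof.
(* [3 <= n] is only needed in the paper for E^{0,2} to exist; the
   formal model and its Poincaré lemma work for every n. *)
move=> _ e0_unit; split; first exact: i_dbarb_onto.
by move=> v; apply: i_dbarb_kerP.
Qed.
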